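(* Let $K$ be an infinite, algebraically closed, totally ordered quasi-field of characteristic $1$, and let $P,Q\in K[X_1,\dots,X_n]$. (a) The polynomial functions $K^n\to K$ defined by $P$ and by its convex hull $\mathrm{conv}(P)$ coincide. (b) The polynomial functions $\tilde P$ and $\tilde Q$ are equal if and only if $\mathrm{conv}(P)=\mathrm{conv}(Q)$.
   Context: A quasi-field of characteristic $1$ is a commutative semiring $K$ with $1+1=1$ in which every nonzero element is multiplicatively invertible; ordered by $u\le v$ iff $u+v=v$, totally ordered meaning the order is total (so $u+v=\max(u,v)$). $K$ is algebraically closed if every nonconstant polynomial of $K[X]$ has a root in $K$ (a root of $P$ being a point where $P$ vanishes or where the maximum of its monomials is attained at least twice); in particular every element has unique $m$-th roots. For $P=\sum_{\alpha\in I}\lambda_\alpha X^\alpha$ ($I\subset\mathbb N^n$ finite, $\lambda_\alpha\neq0$), $\mathrm{conv}(P)=\sum_{\gamma}\mu_\gamma X^\gamma$, the sum over lattice points $\gamma\in\mathbb N^n$ of the convex hull of $I$, where $\mu_\gamma$ is the largest value of $\left(\prod_{\alpha\in I}\lambda_\alpha^{c_\alpha}\right)^{1/m}$ over all $m\ge1$ and $c_\alpha\in\mathbb N$ with $\sum c_\alpha=m$ and $\sum c_\alpha\alpha=m\gamma$; equivalently, the smallest ''convex'' polynomial $\ge P$. $\tilde P:K^n\to K$ denotes $x\mapsto P(x)$. *)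

From HB Require Import structures.
From mathcomp Require Import all_boot all_order all_algebra.
From Stdlib Require Import ClassicalEpsilon.
Set Implicit Arguments. Unset Strict Implicit. Unset Printing Implicit Defensive.
Import Order.TTheory GRing.Theory.
Local Open Scope ring_scope.

Section MPoly.
Variables (K : comNzSemiRingType) (n : nat).

Definition expo := (n.-tuple nat)%type.

Definition mono (a : expo) (x : 'I_n -> K) : K := \prod_(k < n) x k ^+ tnth a k.

Record mpoly := MPoly {
  mcoef : expo -> K;
  msupp : seq expo;
  msuppP : forall a, mcoef a != 0 -> a \in msupp }.

Definition mexps (P : mpoly) : seq expo :=
  [seq a <- undup (msupp P) | mcoef P a != 0].

Definition meval (P : mpoly) (x : 'I_n -> K) : K :=
  \sum_(a <- undup (msupp P)) mcoef P a * mono a x.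

Definition sle (u v : K) : Prop := u + v = v.

(* nu is one of the values (prod lambda_alpha^c_alpha)^(1/m), with m >= 1,
   sum c_alpha = m and sum c_alpha alpha = m gamma *)
Definition conv_cand (P : mpoly) (g : expo) (nu : K) : Prop :=
  exists (m : nat) (c : expo -> nat),
    [/\ (0 < m)%N,
        (\sum_(a <- mexps P) c a)%N = m,
        (forall k : 'I_n, (\sum_(a <- mexps P) c a * tnth a k)%N = (m * tnth g k)%N)
      & nu ^+ m = \prod_(a <- mexps P) mcoef P a ^+ c a].

Definition conv_max (P : mpoly) (g : expo) (mu : K) : Prop :=
  conv_cand P g mu /\ (forall nu, conv_cand P g nu -> sle nu mu).

(* mu_gamma (0 when gamma is not a lattice point of the convex hull, i.e.
   when there are no candidates) *)
Definition conv_coef (P : mpoly) (g : expo) : K :=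
  match excluded_middle_informative (exists mu, conv_max P g mu) with
  | left h => proj1_sig (constructive_indefinite_description _ h)
  | right _ => 0
  end.

Definition mbound (P : mpoly) : nat := \max_(a <- mexps P) \max_(k < n) tnth a k.

Definition boxseq (B : nat) : seq expo :=
  [seq map_tuple (fun i : 'I_B.+1 => nat_of_ord i) t | t <- enum {: n.-tuple 'I_B.+1}].

Lemma mem_boxseq B (g : expo) : (forall k, tnth g k <= B)%N -> g \in boxseq B.
Proof.
move=> hg; apply/mapP; exists (map_tuple (fun x => inord x) g); first by rewrite mem_enum.
by apply: eq_from_tnth => k; rewrite !tnth_map inordK // ltnS.
Qed.

Lemma conv_cand_bound P g nu : conv_cand P g nu -> forall k, (tnth g k <= mbound P)%N.
Proof.
case=> m [c [m0 hs hk _]] k.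
have : (m * tnth g k <= m * mbound P)%N.
  rewrite -hk -hs (big_distrl (R:=nat)) /= !big_seq; apply: leq_sum => a ha.
  rewrite leq_mul2l; apply/orP; right.

  apply: leq_trans (@leq_bigmax_seq _ _ xpredT (fun b : expo => \max_(k0 < n) tnth b k0) a ha isT).
  exact: (@leq_bigmax _ (fun k0 => tnth a k0) k).
by rewrite leq_pmul2l.
Qed.

Lemma conv_suppP P g : conv_coef P g != 0 -> g \in boxseq (mbound P).
Proof.
rewrite /conv_coef; case: excluded_middle_informative => [[mu [hc _]] _|]; last by rewrite eqxx.
by apply: mem_boxseq; exact: conv_cand_bound hc.
Qed.

Definition conv (P : mpoly) : mpoly := MPoly (@conv_suppP P).

Definition qroot (p : {poly K}) (x : K) : Prop :=
  p.[x] = 0 \/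
  exists i j : nat, [/\ i <> j, (i < size p)%N, (j < size p)%N,
                        p`_i * x ^+ i = p.[x] & p`_j * x ^+ j = p.[x]].

End MPoly.

Definition qf_alg_closed (K : comNzSemiRingType) : Prop :=
  forall p : {poly K}, (1 < size p)%N -> exists x, qroot p x.

(* The value of a polynomial is the maximum of its
   monomials.  The nonzero elements of K form a totally ordered abelian group,
   divisible because K is algebraically closed; written additively, a monomial
   lambda_a x^a becomes the affine form  l_a + <y, a>  on that group.  The
   coefficient mu_g of conv(P) is the largest barycentric combination of the
   l_a whose exponents have barycenter g; by linear-programming duality over
   divisible ordered groups (proved by Fourier-Motzkin elimination) it is also
   the largest v such that  v + <y, g> <= max_a (l_a + <y, a>)  for all y,
   i.e. such that  v X^g <= P  on the points with nonzero coordinates.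
   Both parts of the theorem follow by comparing polynomials monomial by
   monomial. *)

From HB Require Import structures.
From mathcomp Require Import all_boot all_order all_algebra.
From Stdlib Require Import ClassicalEpsilon.
Set Implicit Arguments. Unset Strict Implicit. Unset Printing Implicit Defensive.
Import Order.TTheory GRing.Theory Num.Theory.
Local Open Scope ring_scope.

Definition comb (W : zmodType) (N : nat) (c : nat -> nat) (l : nat -> W) : W :=
  \sum_(i < N) l i *+ c i.

Definition dot (W : zmodType) (n : nat) (y : nat -> W) (a : nat -> int) : W :=
  \sum_(k < n) y k *~ a k.

Definition ev (i : nat) : nat -> nat := fun i' => nat_of_bool (i' == i).

Lemma comb_ev (W : zmodType) N i (l : nat -> W) : (i < N)%N -> comb N (ev i) l = l i.
Proof.
move=> hi; rewrite /comb (bigD1 (Ordinal hi)) //= /ev eqxx mulr1n big1 ?addr0 //.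
move=> j hj; suff /negbTE -> : (j : nat) != i by rewrite mulr0n.
by apply: contra hj => /eqP e; apply/eqP/val_inj.
Qed.

Lemma comb0 (W : zmodType) N c (l : nat -> W) :
  (forall i, (i < N)%N -> l i = 0) -> comb N c l = 0.
Proof. by move=> h; rewrite /comb big1 // => i _; rewrite h // mul0rn. Qed.

Lemma comb_const (W : zmodType) N c (t : W) :
  comb N c (fun _ => t) = t *+ (\sum_(i < N) c i).
Proof. by rewrite /comb sumrMnr. Qed.

Lemma comb_pair (W : zmodType) N p q (x y : nat) (l : nat -> W) :
  (p < N)%N -> (q < N)%N ->
  comb N (fun i => (ev p i * x + ev q i * y)%N) l = l p *+ x + l q *+ y.
Proof.
move=> hp hq; rewrite /comb.
under eq_bigr do rewrite mulrnDr !mulrnA.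
by rewrite big_split /= !sumrMnl -!/(comb N (ev _) l) !comb_ev.
Qed.

Lemma mulrzMn (W : zmodType) (x : W) (z : int) m : x *~ (z *+ m) = x *~ z *+ m.
Proof. by elim: m => [|m ih]; rewrite ?mulr0n ?mulr0z // !mulrS mulrzDr ih. Qed.

Lemma comb_affine (W : zmodType) N c (l : nat -> W) y n (a : nat -> nat -> int) :
  comb N c (fun i => l i + dot n y (a i)) =
  comb N c l + dot n y (fun k => comb N c (fun i => a i k)).
Proof.
rewrite /comb /dot.
under eq_bigr do rewrite mulrnDl.
rewrite big_split /=; congr (_ + _).
under eq_bigr do rewrite -sumrMnl.
rewrite exchange_big /=; apply: eq_bigr => k _.
rewrite mulrz_sumr; apply: eq_bigr => i _; by rewrite mulrzMn.
Qed.

Lemma comb_comb (W : zmodType) N N' (C : nat -> nat) (D : nat -> nat -> nat)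
    (l : nat -> W) :
  comb N (fun i => \sum_(j < N') C j * D j i)%N l = comb N' C (fun j => comb N (D j) l).
Proof.
rewrite /comb.
under eq_bigr do rewrite -sumrMnr.
under [RHS]eq_bigr do rewrite -sumrMnl.
rewrite exchange_big /=; apply: eq_bigr => j _; apply: eq_bigr => i _.
by rewrite -mulrnA mulnC.
Qed.

Section OrderedGroup.
Variables (V : zmodType) (le : rel V).
Hypothesis le_refl : forall x, le x x.
Hypothesis le_trans : forall x y z, le x y -> le y z -> le x z.
Hypothesis le_anti : forall x y, le x y -> le y x -> x = y.
Hypothesis le_total : forall x y, le x y || le y x.
Hypothesis le_add : forall x y z, le x y -> le (x + z) (y + z).

Lemma leD2 x y z w : le x y -> le z w -> le (x + z) (y + w).
Proof.
move=> h1 h2; apply: (le_trans (le_add z h1)).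
by rewrite ![y + _]addrC; apply: le_add.
Qed.

Lemma subr_le0 x y : le x y -> le (x - y) 0.
Proof. by move=> h; have := le_add (- y) h; rewrite subrr. Qed.

Lemma subr_le0P x y : le (x - y) 0 -> le x y.
Proof. by move=> h; have := le_add y h; rewrite subrK add0r. Qed.

Lemma le_opp x y : le x y -> le (- y) (- x).
Proof. by move=> h; apply: subr_le0P; rewrite opprK addrC; exact: subr_le0. Qed.

Lemma le_sum (I : eqType) (s : seq I) (F G : I -> V) :
  (forall i, i \in s -> le (F i) (G i)) -> le (\sum_(i <- s) F i) (\sum_(i <- s) G i).
Proof.
elim: s => [|a s ih] h; first by rewrite !big_nil.
rewrite !big_cons; apply: leD2; first by apply: h; rewrite inE eqxx.
by apply: ih => i hi; apply: h; rewrite inE hi orbT.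
Qed.

Lemma leMn (x y : V) m : le x y -> le (x *+ m) (y *+ m).
Proof.
move=> h; elim: m => [|m ih]; first by rewrite !mulr0n.
by rewrite !mulrS; apply: leD2.
Qed.

Lemma torsion_free (x : V) m : x *+ m.+1 = 0 -> x = 0.
Proof.
have pos_case z : le 0 z -> z *+ m.+1 = 0 -> z = 0.
  move=> hz hm; apply: le_anti => //.
  have : le (z + 0) (z *+ m.+1).
    by rewrite mulrS; apply: leD2 => //; have := leMn m hz; rewrite mul0rn.
  by rewrite addr0 hm.
move=> hm; case/orP: (le_total 0 x) => h; first exact: pos_case.
have h' : le 0 (- x) by rewrite -oppr0; apply: le_opp.
by apply: oppr_inj; rewrite oppr0; apply: pos_case => //; rewrite mulNrn hm oppr0.
Qed.

Lemma leMn2 (x y : V) m : le (x *+ m.+1) (y *+ m.+1) -> le x y.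
Proof.
move=> h; case/orP: (le_total x y) => // h2.
suff -> : x = y by [].
apply/eqP; rewrite -subr_eq0; apply/eqP; apply: (@torsion_free _ m).
rewrite mulrnBl; apply/eqP; rewrite subr_eq0; apply/eqP.
by apply: le_anti => //; apply: leMn.
Qed.

Lemma exists_max (T : eqType) (s : seq T) (f : T -> V) : s != [::] ->
  exists2 x, x \in s & forall y, y \in s -> le (f y) (f x).
Proof.
elim: s => // a s ih _; case: (eqVneq s [::]) => [->|hs].
  by exists a; rewrite ?inE ?eqxx // => y; rewrite inE => /eqP ->.
have [b hb hmax] := ih hs.
case/orP: (le_total (f a) (f b)) => h.
  exists b; first by rewrite inE hb orbT.
  by move=> y; rewrite inE => /orP[/eqP ->|]; last exact: hmax.
exists a; first by rewrite inE eqxx.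
move=> y; rewrite inE => /orP[/eqP ->|hy] //; exact: le_trans (hmax _ hy) h.
Qed.

Hypothesis divisible : forall m x, exists y : V, y *+ m.+1 = x.

Lemma divisibleb m x : exists y : V, y *+ m.+1 == x.
Proof. by have [y hy] := divisible m x; exists y; rewrite hy. Qed.

Definition dv (m : nat) (x : V) : V := xchoose (divisibleb m.-1 x).

Lemma dvK m x : (0 < m)%N -> dv m x *+ m = x.
Proof. by case: m => // m _; apply/eqP/(xchooseP (divisibleb m x)). Qed.

(* This is the elimination of one variable. *)
Lemma interpolation (lo hi : seq (V * nat)) :
  (forall u, u \in lo -> (0 < u.2)%N) -> (forall w, w \in hi -> (0 < w.2)%N) ->
  (forall u w, u \in lo -> w \in hi -> le (u.1 *+ w.2) (w.1 *+ u.2)) ->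
  exists z, (forall u, u \in lo -> le u.1 (z *+ u.2)) /\
            (forall w, w \in hi -> le (z *+ w.2) w.1).
Proof.
move=> hlo hhi hc.
case: (eqVneq lo [::]) => [elo|nlo].
  case: (eqVneq hi [::]) => [ehi|nhi]; first by exists 0; rewrite elo ehi.
  have [w0 hw0 hmin] := exists_max (fun w => - dv w.2 w.1) nhi.
  exists (dv w0.2 w0.1); split; first by rewrite elo.
  move=> w hw; have := le_opp (hmin w hw); rewrite !opprK => h.
  rewrite -[X in le _ X](dvK w.1 (hhi w hw)); exact: leMn.
have [u0 hu0 hmax] := exists_max (fun u => dv u.2 u.1) nlo.
exists (dv u0.2 u0.1); split.
  move=> u hu; rewrite -[X in le X _](dvK u.1 (hlo u hu)); exact: leMn (hmax u hu).
move=> w hw; have := hlo u0 hu0; case e : u0.2 => [//|m] _.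
apply: (@leMn2 _ _ m); rewrite -mulrnA mulnC mulrnA -e dvK; last by rewrite e.
exact: hc.
Qed.

Lemma fm_solve N (s : nat -> V) (a : nat -> int) :
  (forall i, (i < N)%N -> a i = 0 -> le (s i) 0) ->
  (forall p q, (p < N)%N -> (q < N)%N -> 0 < a p -> a q < 0 ->
     le (s p *+ `|a q| + s q *+ `|a p|) 0) ->
  exists z, forall i, (i < N)%N -> le (s i + z *~ a i) 0.
Proof.
move=> hzero hpair.
pose ps := [seq i <- iota 0 N | 0 < a i].
pose qs := [seq i <- iota 0 N | a i < 0].
have memp i : (i \in ps) = (0 < a i) && (i < N)%N by rewrite mem_filter mem_iota.
have memq i : (i \in qs) = (a i < 0) && (i < N)%N by rewrite mem_filter mem_iota.
(* lower bounds  -s q / |a q|  and upper bounds  -s p / |a p|  for -z *)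
pose lo := [seq (s q, `|a q|%N) | q <- qs].
pose hi := [seq (- s p, `|a p|%N) | p <- ps].
have [z [hzlo hzhi]] : exists z, (forall u, u \in lo -> le u.1 (z *+ u.2)) /\
                                 (forall w, w \in hi -> le (z *+ w.2) w.1).
  apply: interpolation.
  - move=> u /mapP[q]; rewrite memq => /andP[hq _] -> /=.
    by rewrite absz_gt0 ltr0_neq0.
  - move=> w /mapP[p]; rewrite memp => /andP[hp _] -> /=.
    by rewrite absz_gt0 lt0r_neq0.
  - move=> u w /mapP[q]; rewrite memq => /andP[hq hqN] -> /mapP[p].
    rewrite memp => /andP[hp hpN] -> /=.
    by apply: subr_le0P; rewrite mulNrn opprK addrC; exact: hpair.
exists z => i hiN; case: (ltgtP (a i) 0) => ha.
- have := hzlo (s i, `|a i|%N) (map_f _ _); rewrite memq ha hiN => /(_ isT) /= h.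
  have -> : a i = - (`|a i|%:Z) by rewrite abszE ltr0_norm // opprK.
  by rewrite mulrNz -pmulrn; apply: subr_le0.
- have := hzhi (- s i, `|a i|%N) (map_f _ _); rewrite memp ha hiN => /(_ isT) /= h.
  have -> : a i = `|a i|%:Z by rewrite abszE gtr0_norm.
  by rewrite -pmulrn -(addrN (s i)) addrC [s i + _]addrC; exact: le_add.
- by rewrite ha mulr0z addr0; apply: hzero.
Qed.

(* the combination |a_q| e_p + |a_p| e_q cancels the coefficient of z *)
Lemma pos_neg_cancel (x y : int) : 0 < x -> y < 0 -> x *+ `|y|%N + y *+ `|x|%N = 0.
Proof.
move=> hx hy; rewrite !pmulrn !mulrzz !abszE ltr0_norm // gtr0_norm //.
by rewrite mulrN mulrC addNr.
Qed.

Lemma fm_step N (a : nat -> int) : exists N' (D : nat -> nat -> nat),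
  (forall j, (j < N')%N -> comb N (D j) a = 0) /\
  forall s : nat -> V, (forall j, (j < N')%N -> le (comb N (D j) s) 0) ->
    exists z, forall i, (i < N)%N -> le (s i + z *~ a i) 0.
Proof.
pose zs := [seq i <- iota 0 N | a i == 0].
pose ps := [seq i <- iota 0 N | 0 < a i].
pose qs := [seq i <- iota 0 N | a i < 0].
have memz i : (i \in zs) = (a i == 0) && (i < N)%N by rewrite mem_filter mem_iota.
have memp i : (i \in ps) = (0 < a i) && (i < N)%N by rewrite mem_filter mem_iota.
have memq i : (i \in qs) = (a i < 0) && (i < N)%N by rewrite mem_filter mem_iota.
(* a row is labelled either by an inequality i with a i = 0, or by a pair
   (p, q) with a p > 0 > a q, giving the row |a q| e_p + |a p| e_q *)
pose row (d : nat + nat * nat) : nat -> nat :=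
  match d with
  | inl i => ev i
  | inr (p, q) => fun i => (ev p i * `|a q| + ev q i * `|a p|)%N
  end.
pose ds := [seq (inl i : nat + nat * nat) | i <- zs] ++
           [seq (inr (p, q) : nat + nat * nat) | p <- ps, q <- qs].
have rowP d : d \in ds -> exists2 j, (j < size ds)%N & nth (inl 0%N) ds j = d.
  by move=> hd; exists (index d ds); rewrite ?index_mem ?nth_index.
exists (size ds), (fun j => row (nth (inl 0%N) ds j)); split.
  move=> j /(mem_nth (inl 0%N)); case: (nth _ ds j) => [i|[p q]]; rewrite mem_cat.
    case/orP=> [/mapP[i' hi' [->]]|/allpairsP[[? ?] [_ _ //]]].
    by move: hi'; rewrite memz => /andP[/eqP h1 h2]; rewrite comb_ev.
  case/orP=> [/mapP[? _ //]|/allpairsP[[p' q'] [hp hq [-> ->]]]].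
  move: hp hq; rewrite memp memq => /andP[h1 h2] /andP[h3 h4].
  by rewrite comb_pair // pos_neg_cancel.
move=> s hs; apply: fm_solve.
  move=> i hi hai; have /rowP[j hj e] : (inl i : nat + nat * nat) \in ds.
    by rewrite mem_cat; apply/orP; left; apply: map_f; rewrite memz hai eqxx.
  by have := hs j hj; rewrite e comb_ev.
move=> p q hp hq hap haq.
have /rowP[j hj e] : (inr (p, q) : nat + nat * nat) \in ds.
  rewrite mem_cat; apply/orP; right; apply/allpairsP; exists (p, q).
  by rewrite memp memq hap haq hp hq.
by have := hs j hj; rewrite e /= comb_pair.
Qed.

Lemma fm_elim n : forall N (a : nat -> nat -> int), exists M (C : nat -> nat -> nat),
  (forall j k, (j < M)%N -> (k < n)%N -> comb N (C j) (fun i => a i k) = 0) /\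
  forall l : nat -> V, (forall j, (j < M)%N -> le (comb N (C j) l) 0) ->
    exists y, forall i, (i < N)%N -> le (l i + dot n y (a i)) 0.
Proof.
elim: n => [|n IH] N a.
  exists N, ev; split => // l hl; exists (fun _ => 0) => i hi.
  by rewrite /dot big_ord0 addr0 -(comb_ev l hi); apply: hl.
have [N' [D [hD hDsol]]] := fm_step N (fun i => a i n).
pose a' j k := comb N (D j) (fun i => a i k).
have [M [C [hC hCsol]]] := IH N' a'.
exists M, (fun j i => \sum_(j' < N') C j j' * D j' i)%N; split.
  move=> j k hj; rewrite ltnS leq_eqVlt => /orP[/eqP ->|hk]; rewrite comb_comb.
    by apply: comb0 => j' hj'; apply: hD.
  exact: hC.
move=> l hl.
have [y hy] : exists y, forall j, (j < N')%N ->
    le (comb N (D j) l + dot n y (a' j)) 0.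
  by apply: hCsol => j hj; rewrite -comb_comb; apply: hl.
have [z hz] : exists z, forall i, (i < N)%N ->
    le (l i + dot n y (a i) + z *~ a i n) 0.
  by apply: hDsol => j hj; rewrite comb_affine; apply: hy.
exists (fun k => if k == n then z else y k) => i hi.
rewrite /dot big_ord_recr /= eqxx addrA; congr (le (_ + _ + _) 0): (hz i hi).
by apply: eq_bigr => k _ /=; rewrite ltn_eqF.
Qed.

Definition primal M (l : nat -> V) (a : nat -> nat -> int) n (v : V) :=
  exists c : nat -> nat, [/\ (0 < \sum_(i < M) c i)%N,
    (forall k, (k < n)%N -> comb M c (fun i => a i k) = 0) &
    v *+ (\sum_(i < M) c i) = comb M c l].

Definition dominated M (l : nat -> V) (a : nat -> nat -> int) n (v : V) :=
  forall y, exists2 i, (i < M)%N & le v (l i + dot n y (a i)).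

Lemma weak_duality M l a n y (t v : V) : primal M l a n v ->
  (forall i, (i < M)%N -> le (l i + dot n y (a i)) t) -> le v t.
Proof.
case=> c [hm hk hv] hy.
have e : comb M c l = comb M c (fun i => l i + dot n y (a i)).
  by rewrite comb_affine /dot big1 ?addr0 // => k _; rewrite hk // mulr0z.
move: hm hv; case E: (\sum_(i < M) c i)%N => [//|m] _ hv.
apply: (@leMn2 _ _ m); rewrite hv e -E -comb_const.
apply: le_sum => i _; apply: leMn; exact: hy.
Qed.

Lemma fm_bounded M l a n K0 (C : nat -> nat -> nat) (t : V) :
  (forall l' : nat -> V, (forall j, (j < K0)%N -> le (comb M (C j) l') 0) ->
    exists y, forall i, (i < M)%N -> le (l' i + dot n y (a i)) 0) ->
  (forall j, (j < K0)%N -> (0 < \sum_(i < M) C j i)%N ->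
    le (comb M (C j) l) (t *+ \sum_(i < M) C j i)) ->
  exists y, forall i, (i < M)%N -> le (l i + dot n y (a i)) t.
Proof.
move=> hCsol ht.
have [y hy] : exists y, forall i, (i < M)%N -> le (l i - t + dot n y (a i)) 0.
  apply: (hCsol (fun i => l i - t)) => j hj.
  have -> : comb M (C j) (fun i => l i - t) =
            comb M (C j) l - t *+ \sum_(i < M) C j i.
    by rewrite -comb_const /comb -sumrB; apply: eq_bigr => i _; rewrite mulrnBl.
  case E : (\sum_(i < M) C j i)%N => [|m].
    rewrite mulr0n subr0 /comb big1 // => i _.
    have : (C j i <= \sum_(i < M) C j i)%N by rewrite (bigD1 i) //= leq_addr.
    by rewrite E leqn0 => /eqP ->; rewrite mulr0n.
  by apply: subr_le0; rewrite -E; apply: ht => //; rewrite E.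
by exists y => i hi; apply: subr_le0P; rewrite addrAC; apply: hy.
Qed.

Hypothesis nontrivial : exists e : V, e != 0.

(* A nontrivial ordered group has a positive element e, and  v <= v - e  then
   fails: this rules out primal and dominated values when the forms can be
   pushed below every bound. *)
Lemma exists_pos : exists e : V, le 0 e /\ e != 0.
Proof.
have [e he] := nontrivial; case/orP: (le_total 0 e) => h; first by exists e.
exists (- e); split; last by rewrite oppr_eq0.
by rewrite -oppr0; apply: le_opp.
Qed.

Lemma not_le_subr (v e : V) : le 0 e -> e != 0 -> ~ le v (v - e).
Proof.
move=> h1 h2 h3; have h4 : le (v - v) (v - e - v) by apply: le_add.
rewrite subrr addrC addKr in h4.
have h5 : le e 0 by have := le_opp h4; rewrite opprK oppr0.
by move/eqP: h2; apply; apply: le_anti.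
Qed.

Theorem lp_duality M l a n :
  (exists mu, [/\ primal M l a n mu, (forall v, primal M l a n v -> le v mu) &
                  (forall v, dominated M l a n v -> le v mu)])
  \/ ((forall v, ~ primal M l a n v) /\ (forall v, ~ dominated M l a n v)).
Proof.
have [K0 [C [hC hCsol]]] := fm_elim n M a.
pose T := [seq j <- iota 0 K0 | (0 < \sum_(i < M) C j i)%N].
have memT j : (j \in T) = (0 < \sum_(i < M) C j i)%N && (j < K0)%N.
  by rewrite mem_filter mem_iota.
case: (eqVneq T [::]) => [eT|nT].
  (* no combination carries weight: the forms are unbounded below *)
  right; have [e [he0 he]] := exists_pos.
  have hy t : exists y, forall i, (i < M)%N -> le (l i + dot n y (a i)) t.
    apply: fm_bounded hCsol _ => j hj hp; suff : j \in T by rewrite eT.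
    by rewrite memT hp hj.
  split=> v hv; have [y hy'] := hy (v - e).
    exact: (not_le_subr he0 he (weak_duality hv hy')).
  have [i hi hvi] := hv y.
  exact: (not_le_subr he0 he (le_trans hvi (hy' i hi))).
(* the best row of the elimination realizes the optimum *)
left; pose value j := dv (\sum_(i < M) C j i) (comb M (C j) l).
have [j0 hj0 hmax] := exists_max value nT.
move: (hj0); rewrite memT => /andP[hp0 hk0].
have cmu : primal M l a n (value j0).
  by exists (C j0); split => //; [move=> k hk; apply: hC | rewrite dvK].
have [y hy] : exists y, forall i, (i < M)%N ->
    le (l i + dot n y (a i)) (value j0).
  apply: fm_bounded hCsol _ => j hj hp; have hjT : j \in T by rewrite memT hp hj.
  rewrite -[X in le X _](dvK (comb M (C j) l) hp); apply: leMn; exact: hmax.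
exists (value j0); split => // v; first by move=> hv; apply: (weak_duality hv hy).
by move=> hv; have [i hi hvi] := hv y; apply: le_trans hvi (hy i hi).
Qed.

End OrderedGroup.

Section QuasiField.
Variable K : comNzSemiRingType.
Hypothesis hchar1 : 1 + 1 = 1 :> K.
Hypothesis hinv : forall x : K, x != 0 -> exists y, x * y = 1.
Hypothesis htotal : forall u v : K, sle u v \/ sle v u.

Lemma sle_refl (x : K) : sle x x.
Proof. by rewrite /sle -{1 2}(mulr1 x) -mulrDr hchar1 mulr1. Qed.

Lemma sle_trans (x y z : K) : sle x y -> sle y z -> sle x z.
Proof. by rewrite /sle => h1 h2; rewrite -h2 addrA h1. Qed.

Lemma sle_anti (x y : K) : sle x y -> sle y x -> x = y.
Proof. by rewrite /sle => h1 h2; rewrite -h1 addrC h2. Qed.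

Lemma sle0 (x : K) : sle 0 x.
Proof. by rewrite /sle add0r. Qed.

Lemma sle_mulr (u v w : K) : sle u v -> sle (u * w) (v * w).
Proof. by rewrite /sle => h; rewrite -mulrDl h. Qed.

Lemma sle_mul2 (a b c d : K) : sle a b -> sle c d -> sle (a * c) (b * d).
Proof.
move=> h1 h2; apply: sle_trans (sle_mulr c h1) _.
by rewrite ![b * _]mulrC; apply: sle_mulr.
Qed.

Lemma sle_addl (u v : K) : sle u (u + v).
Proof. by rewrite /sle addrA sle_refl. Qed.

Lemma sle_addr (u v : K) : sle v (u + v).
Proof. by rewrite addrC; apply: sle_addl. Qed.

Lemma sle_add (u v z : K) : sle u z -> sle v z -> sle (u + v) z.
Proof. by rewrite /sle => h1 h2; rewrite -addrA h2 h1. Qed.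

Lemma sle_sumP (I : eqType) (s : seq I) (F : I -> K) z :
  (forall i, i \in s -> sle (F i) z) -> sle (\sum_(i <- s) F i) z.
Proof.
elim: s => [|a s ih] h; first by rewrite big_nil; exact: sle0.
rewrite big_cons; apply: sle_add; first by apply: h; rewrite inE eqxx.
by apply: ih => i hi; apply: h; rewrite inE hi orbT.
Qed.

Lemma sle_term (I : eqType) (s : seq I) (F : I -> K) i :
  i \in s -> sle (F i) (\sum_(j <- s) F j).
Proof.
elim: s => [//|a s ih]; rewrite inE big_cons => /orP[/eqP ->|hi].
  exact: sle_addl.
apply: sle_trans (ih hi) _; exact: sle_addr.
Qed.

Lemma sum_attained (I : eqType) (s : seq I) (F : I -> K) :
  \sum_(i <- s) F i = 0 \/ exists2 i, i \in s & \sum_(j <- s) F j = F i.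
Proof.
elim: s => [|a s ih]; first by left; rewrite big_nil.
rewrite big_cons; case: ih => [->|[i hi ->]].
  by right; exists a; rewrite ?inE ?eqxx ?addr0.
case: (htotal (F a) (F i)) => h.
  by right; exists i; rewrite ?inE ?hi ?orbT.
by right; exists a; rewrite ?inE ?eqxx // addrC.
Qed.

Lemma sle_prod (I : eqType) (s : seq I) (F G : I -> K) :
  (forall i, i \in s -> sle (F i) (G i)) -> sle (\prod_(i <- s) F i) (\prod_(i <- s) G i).
Proof.
elim: s => [|a s ih] h; first by rewrite !big_nil; exact: sle_refl.
rewrite !big_cons; apply: sle_mul2; first by apply: h; rewrite inE eqxx.
by apply: ih => i hi; apply: h; rewrite inE hi orbT.
Qed.

Lemma sle_pow (u v : K) m : sle u v -> sle (u ^+ m) (v ^+ m).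
Proof.
move=> h; elim: m => [|m ih]; first by rewrite !expr0; exact: sle_refl.
by rewrite !exprS; apply: sle_mul2.
Qed.

Lemma mulf_neq0 (x y : K) : x != 0 -> y != 0 -> x * y != 0.
Proof.
move=> hx hy; have [x' hx'] := hinv hx; have [y' hy'] := hinv hy.
apply: contraTneq isT => exy; have := oner_neq0 K.
by rewrite -hx' -[x]mulr1 -hy' mulrA exy !mul0r eqxx.
Qed.

Lemma expf_neq0 (x : K) m : x != 0 -> x ^+ m != 0.
Proof. by move=> hx; elim: m => [|m ih]; rewrite ?expr0 ?oner_neq0 // exprS mulf_neq0. Qed.

Lemma prodf_neq0 (I : eqType) (r : seq I) (F : I -> K) :
  (forall i, i \in r -> F i != 0) -> \prod_(i <- r) F i != 0.
Proof.
elim: r => [|x r ih] h; rewrite ?big_nil ?oner_neq0 // big_cons mulf_neq0 //.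
  by apply: h; rewrite inE eqxx.
by apply: ih => i hi; apply: h; rewrite inE hi orbT.
Qed.

Lemma mulIf (u v w : K) : w != 0 -> u * w = v * w -> u = v.
Proof.
move=> hw e; have [y hy] := hinv hw.
by rewrite -(mulr1 u) -(mulr1 v) -hy !mulrA e.
Qed.

Lemma pow_inj_le (u v : K) m : sle v u -> v ^+ m.+1 = u ^+ m.+1 -> v = u.
Proof.
move=> h e.
have e1 : u * v ^+ m = v * v ^+ m.
  apply: sle_anti; last by apply: sle_mulr.
  rewrite -exprS e exprS; apply: sle_mul2; [exact: sle_refl | exact: sle_pow].
case: (eqVneq v 0) => hv; last by symmetry; apply: (mulIf (expf_neq0 m hv)).
case: (eqVneq u 0) => [->|hu]; first by rewrite hv.
by move: e; rewrite hv expr0n /= => /eqP; rewrite eq_sym (negbTE (expf_neq0 _ hu)).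
Qed.

Lemma pow_sle (u v : K) m : (0 < m)%N -> sle (u ^+ m) (v ^+ m) -> sle u v.
Proof.
case: m => // m _ h; case: (htotal u v) => // h2.
suff -> : u = v by exact: sle_refl.
by apply: esym; apply: (pow_inj_le h2); apply: sle_anti; [exact: sle_pow h2 | exact: h].
Qed.

Definition KUnit := {x : K | x != 0}.
HB.instance Definition _ := [Choice of KUnit by <:].

Lemma valKU_neq0 (u : KUnit) : val u != 0.
Proof. exact: valP u. Qed.

Lemma unit_invertible (u : KUnit) : exists y, val u * y == 1.
Proof. by have [y hy] := hinv (valKU_neq0 u); exists y; rewrite hy. Qed.

Definition inv_unit (u : KUnit) : K := xchoose (unit_invertible u).

Lemma mul_inv_unit (u : KUnit) : val u * inv_unit u = 1.
Proof. exact/eqP/(xchooseP (unit_invertible u)). Qed.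

Lemma inv_unit_neq0 (u : KUnit) : inv_unit u != 0.
Proof. by apply: contra_neq (oner_neq0 K) => h; rewrite -(mul_inv_unit u) h mulr0. Qed.

Definition unit0 : KUnit := exist _ 1 (oner_neq0 K).
Definition unit_add (u v : KUnit) : KUnit :=
  exist _ (val u * val v) (mulf_neq0 (valP u) (valP v)).
Definition unit_opp (u : KUnit) : KUnit := exist _ (inv_unit u) (inv_unit_neq0 u).

Lemma unit_addA : associative unit_add.
Proof. by move=> u v w; apply: val_inj; rewrite /= mulrA. Qed.
Lemma unit_addC : commutative unit_add.
Proof. by move=> u v; apply: val_inj; rewrite /= mulrC. Qed.
Lemma unit_add0 : left_id unit0 unit_add.
Proof. by move=> u; apply: val_inj; rewrite /= mul1r. Qed.
Lemma unit_addN : left_inverse unit0 unit_opp unit_add.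
Proof. by move=> u; apply: val_inj; rewrite /= mulrC mul_inv_unit. Qed.

HB.instance Definition _ :=
  GRing.isZmodule.Build KUnit unit_addA unit_addC unit_add0 unit_addN.

Lemma valD (u v : KUnit) : val (u + v) = val u * val v. Proof. by []. Qed.

Lemma valMn (u : KUnit) m : val (u *+ m) = val u ^+ m.
Proof. by elim: m => [|m ih]; rewrite ?mulr0n ?expr0 // mulrS valD ih exprS. Qed.

Lemma val_sum I (s : seq I) (F : I -> KUnit) :
  val (\sum_(i <- s) F i) = \prod_(i <- s) val (F i).
Proof. by elim: s => [|a s ih]; rewrite ?big_nil // !big_cons valD ih. Qed.

Definition to_unit (x : K) : KUnit := insubd unit0 x.

Lemma to_unitK (x : K) : x != 0 -> val (to_unit x) = x.
Proof. by move=> hx; rewrite /to_unit val_insubd hx. Qed.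

(* The order of K makes KUnit a totally ordered abelian group ... *)
Definition le_unit (u v : KUnit) : bool := val u + val v == val v.

Lemma le_unitP u v : reflect (sle (val u) (val v)) (le_unit u v).
Proof. exact: eqP. Qed.

Lemma le_unit_refl u : le_unit u u.
Proof. by apply/le_unitP; exact: sle_refl. Qed.
Lemma le_unit_trans u v w : le_unit u v -> le_unit v w -> le_unit u w.
Proof. by move=> /le_unitP h1 /le_unitP h2; apply/le_unitP; exact: sle_trans h2. Qed.
Lemma le_unit_anti u v : le_unit u v -> le_unit v u -> u = v.
Proof. by move=> /le_unitP h1 /le_unitP h2; apply: val_inj; exact: sle_anti. Qed.
Lemma le_unit_total u v : le_unit u v || le_unit v u.
Proof. by case: (htotal (val u) (val v)) => h; apply/orP; [left|right]; apply/le_unitP. Qed.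
Lemma le_unit_add u v w : le_unit u v -> le_unit (u + w) (v + w).
Proof. by move=> /le_unitP h; apply/le_unitP; rewrite !valD; exact: sle_mulr. Qed.

Lemma le_unit_addK (u v w : KUnit) : le_unit (u + w) (v + w) -> le_unit u v.
Proof. by move=> h; have := le_unit_add (- w) h; rewrite !addrK. Qed.

(* ... which is divisible since K is algebraically closed: a root of
   X^(m+1) + x, which can only be a point where both monomials agree, is an
   (m+1)-th root of x ... *)
Hypothesis hclosed : qf_alg_closed K.

Lemma unit_divisible m (x : KUnit) : exists y : KUnit, y *+ m.+1 = x.
Proof.
pose p : {poly K} := 'X^(m.+1) + (val x)%:P.
have hx0 := valKU_neq0 x.
have [y hy] : exists y, qroot p y by apply: hclosed; rewrite size_XnaddC.
have pe : p.[y] = y ^+ m.+1 + val x by rewrite hornerD hornerXn hornerC.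
have pn0 : p.[y] != 0.
  apply/eqP => e; have : sle (val x) p.[y] by rewrite pe; exact: sle_addr.
  by rewrite e /sle addr0 => /eqP; rewrite (negbTE hx0).
have cp i : p`_i = (i == m.+1)%:R + (if i == 0%N then val x else 0).
  by rewrite coefD coefXn coefC.
have deg_cases k : p`_k * y ^+ k = p.[y] -> k = 0%N \/ k = m.+1.
  rewrite cp; case: (eqVneq k 0%N) => [->|k0]; first by left.
  case: (eqVneq k m.+1) => [->|km]; first by right.
  by rewrite addr0 mul0r => e; rewrite -e eqxx in pn0.
have c0 : p`_0 = val x by rewrite cp /= mulr0n add0r.
have cm : p`_(m.+1) = 1 by rewrite cp eqxx /= addr0.
have hy' : y ^+ m.+1 = val x.
  case: hy => [/eqP|[i [j [hij _ _ ei ej]]]]; first by rewrite (negbTE pn0).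
  have from_degrees k k' : p`_k * y ^+ k = p.[y] -> p`_k' * y ^+ k' = p.[y] ->
      k = 0%N -> k' = m.+1 -> y ^+ m.+1 = val x.
    by move=> ek ek' k0 k'm; rewrite k0 in ek; rewrite k'm in ek';
      rewrite -(mul1r (y ^+ _)) -cm ek' -ek c0 expr0 mulr1.
  case: (deg_cases i ei) (deg_cases j ej) => [hi|hi] [hj|hj].
  - by move: hij; rewrite hi hj.
  - exact: from_degrees ei ej hi hj.
  - exact: from_degrees ej ei hj hi.
  - by move: hij; rewrite hi hj.
have hy0 : y != 0 by apply: contra_neq hx0 => hy0; rewrite -hy' hy0 expr0n.
by exists (exist _ y hy0); apply: val_inj; rewrite valMn.
Qed.

Hypothesis hinfinite : forall s : seq K, exists x, x \notin s.

Lemma unit_nontrivial : exists e : KUnit, e != 0.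
Proof.
have [x] := hinfinite [:: 0; 1]; rewrite !inE negb_or => /andP[h0 h1].
by exists (exist _ x h0); apply: contra h1 => /eqP /(f_equal val) /= ->.
Qed.

Variable n : nat.

Lemma meval_attained (Q : mpoly K n) x : meval Q x != 0 ->
  exists a, mcoef Q a != 0 /\ meval Q x = mcoef Q a * mono a x.
Proof.
move=> hQ.
have [e|[a _ e]] := sum_attained (undup (msupp Q)) (fun a => mcoef Q a * mono a x).
  by rewrite /meval e eqxx in hQ.
exists a; split; last by rewrite /meval e.
by apply: contra_neq hQ => ha0; rewrite /meval e ha0 mul0r.
Qed.

(* The coefficient mu_g of conv(P) as an instance of the duality theorem in
   the unit group: the exponents a_i of P give the forms  l_i + <y, a_i - g>
   with l_i the unit lambda_{a_i}. *)
Section Hull.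
Variables (P : mpoly K n) (g : expo n).

Let E := mexps P.
Let M := size E.
Let expo_at i := nth (nseq_tuple n 0%N) E i.
Let coef_at i : KUnit := to_unit (mcoef P (expo_at i)).
Let shift_at i k : int := (nth 0%N (expo_at i) k)%:Z - (nth 0%N g k)%:Z.

Lemma mexps_uniq : uniq E.
Proof. by rewrite /E /mexps filter_uniq // undup_uniq. Qed.

Lemma mem_mexps a : (a \in E) = (mcoef P a != 0).
Proof.
rewrite /E /mexps mem_filter mem_undup; case h: (mcoef P a != 0) => //=.
exact: msuppP.
Qed.

Lemma coef_at_neq0 i : (i < M)%N -> mcoef P (expo_at i) != 0.
Proof. by move=> hi; rewrite -mem_mexps; apply: mem_nth. Qed.

Lemma big_mexps (R : Type) (idx : R) (op : R -> R -> R) (F : expo n -> R) :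
  \big[op/idx]_(a <- E) F a = \big[op/idx]_(i < M) F (expo_at i).
Proof. by rewrite (big_nth (nseq_tuple n 0%N)) big_mkord. Qed.

Lemma comb_shift c k : comb M c (fun i => shift_at i k) =
  (\sum_(i < M) c i * nth 0%N (expo_at i) k)%N%:Z -
  (nth 0%N g k * \sum_(i < M) c i)%N%:Z.
Proof.
rewrite /comb /shift_at; under eq_bigr do rewrite mulrnBl.
rewrite sumrB -!natz !natr_sum big_distrr /= natr_sum.
by congr (_ - _); apply: eq_bigr => i _; rewrite !natz pmulrn mulrzz -PoszM mulnC.
Qed.

Lemma val_comb_coef c :
  val (comb M c coef_at) = \prod_(i < M) mcoef P (expo_at i) ^+ c i.
Proof.
rewrite /comb val_sum; apply: eq_bigr => i _.
by rewrite valMn to_unitK // coef_at_neq0.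
Qed.

Lemma conv_cand_unit nu : conv_cand P g nu ->
  nu != 0 /\ primal M coef_at shift_at n (to_unit nu).
Proof.
case=> m [c [hm hs hk hv]].
have hprod : \prod_(a <- E) mcoef P a ^+ c a != 0.
  by apply: prodf_neq0 => a; rewrite mem_mexps => h; apply: expf_neq0.
have hnu : nu != 0.
  apply: contra_neq hprod => nu0; rewrite -/E -hv nu0 expr0n.
  by case: m hm {hs hk hv}.
split => //; exists (fun i => c (expo_at i)); split.
- by rewrite -(big_mexps _ _ c) hs.
- move=> k hk'.
  have e1 : (\sum_(a <- E) c a * nth 0%N a k = m * nth 0%N g k)%N.
    have := hk (Ordinal hk'); rewrite (tnth_nth 0%N) /= => <-.
    by apply: eq_bigr => a _; rewrite (tnth_nth 0%N).
  rewrite comb_shift -(big_mexps _ _ (fun a => (c a * nth 0%N a k)%N)) e1.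
  by rewrite -(big_mexps _ _ c) hs mulnC subrr.
- apply: val_inj; rewrite valMn to_unitK // val_comb_coef.
  by rewrite -(big_mexps _ _ c) hs hv big_mexps.
Qed.

Lemma unit_conv_cand u : primal M coef_at shift_at n u -> conv_cand P g (val u).
Proof.
case=> c [hm hk hv].
have cE i : (i < M)%N -> c (index (expo_at i) E) = c i.
  by move=> hi; rewrite /expo_at index_uniq // mexps_uniq.
exists (\sum_(i < M) c i)%N, (fun a => c (index a E)); split => //.
- by rewrite big_mexps; apply: eq_bigr => i _; rewrite cE.
- move=> k; have := hk k (ltn_ord k); rewrite comb_shift => /eqP.
  rewrite subr_eq0 eqz_nat => /eqP e.
  rewrite big_mexps (tnth_nth 0%N g) -mulnC -e; apply: eq_bigr => i _.
  by rewrite cE // (tnth_nth 0%N).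
- rewrite -valMn hv val_comb_coef big_mexps.
  by apply: eq_bigr => i _; rewrite cE.
Qed.

Definition mono_unit (y : nat -> KUnit) (b : expo n) : KUnit :=
  \sum_(k < n) y k *+ nth 0%N b k.

Lemma val_mono_unit y b :
  val (mono_unit y b) = mono b (fun k : 'I_n => val (y k)).
Proof. by rewrite val_sum /mono; apply: eq_bigr => k _; rewrite valMn (tnth_nth 0%N). Qed.

Lemma dot_shift y i : dot n y (shift_at i) + mono_unit y g = mono_unit y (expo_at i).
Proof.
rewrite /dot /shift_at /mono_unit -big_split /=; apply: eq_bigr => k _.
by rewrite mulrzBr -!pmulrn subrK.
Qed.

Let duality := lp_duality le_unit_refl le_unit_trans le_unit_anti le_unit_total
  le_unit_add unit_divisible unit_nontrivial M coef_at shift_at n.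

Lemma conv_max_of_unit mu : primal M coef_at shift_at n mu ->
  (forall v, primal M coef_at shift_at n v -> le_unit v mu) ->
  conv_max P g (val mu).
Proof.
move=> hc hmax; split; first exact: unit_conv_cand.
move=> nu hnu; have [h0 hc'] := conv_cand_unit hnu.
by have /le_unitP := hmax _ hc'; rewrite to_unitK.
Qed.

Lemma conv_max_exists nu : conv_cand P g nu -> exists mu, conv_max P g mu.
Proof.
move=> h; have [h0 hc] := conv_cand_unit h.
case: duality => [[mu [c1 c2 c3]]|[n1 n2]]; last by case: (n1 _ hc).
by exists (val mu); apply: conv_max_of_unit.
Qed.

Lemma conv_max_dominates nu : nu != 0 ->
  (forall x : 'I_n -> K, (forall k, x k != 0) -> sle (nu * mono g x) (meval P x)) ->
  exists2 mu, conv_max P g mu & sle nu mu.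
Proof.
move=> hnu h.
have hdom : dominated le_unit M coef_at shift_at n (to_unit nu).
  move=> y; pose x := fun k : 'I_n => val (y k).
  have hx := h x (fun k => valKU_neq0 _).
  have hm : mono g x = val (mono_unit y g) by rewrite val_mono_unit.
  have hmn : nu * mono g x != 0 by rewrite hm mulf_neq0 ?valKU_neq0.
  have hPx : meval P x != 0.
    by apply: contra_neq hmn => e; rewrite e in hx; exact: sle_anti hx (sle0 _).
  have [a [ha0 e]] := meval_attained hPx; rewrite e in hx.
  have haE : a \in E by rewrite mem_mexps.
  exists (index a E); first by rewrite index_mem.
  have hal : expo_at (index a E) = a by rewrite /expo_at nth_index.
  apply: (@le_unit_addK _ _ (mono_unit y g)); rewrite -addrA dot_shift hal.
  by apply/le_unitP; rewrite !valD to_unitK // -hm /coef_at hal to_unitK // val_mono_unit.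
case: duality => [[mu [c1 c2 c3]]|[n1 n2]]; last by case: (n2 _ hdom).
exists (val mu); first exact: conv_max_of_unit.
by have /le_unitP := c3 _ hdom; rewrite to_unitK.
Qed.

(* Conversely every candidate monomial lies below P: raising to the m-th
   power turns  nu X^g  into a product of monomials of P. *)
Lemma conv_cand_le nu : conv_cand P g nu -> forall x, sle (nu * mono g x) (meval P x).
Proof.
case=> m [c [hm hs hk hv]] x.
apply: (pow_sle hm).
have e1 : (nu * mono g x) ^+ m = \prod_(a <- E) (mcoef P a * mono a x) ^+ c a.
  rewrite exprMn hv.
  under [RHS]eq_bigr do rewrite exprMn.
  rewrite big_split /=; congr (_ * _).
  rewrite /mono.
  under [RHS]eq_bigr do rewrite -prodrXl.
  rewrite exchange_big /= -prodrXl; apply: eq_bigr => k _.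
  rewrite -exprM; under eq_bigr do rewrite -exprM.
  rewrite prodrXr; congr (_ ^+ _).
  by rewrite mulnC -hk; apply: eq_bigr => a _; rewrite mulnC.
rewrite e1 -hs -prodrXr; apply: sle_prod => a ha; apply: sle_pow.
apply: (sle_term (fun b => mcoef P b * mono b x)).
by move: ha; rewrite /E /mexps mem_filter => /andP[].
Qed.

End Hull.

Lemma conv_coef_cases (P : mpoly K n) g :
  conv_coef P g = 0 \/ conv_max P g (conv_coef P g).
Proof.
rewrite /conv_coef; case: excluded_middle_informative => h; last by left.
by right; case: constructive_indefinite_description.
Qed.

Lemma conv_max_unique (P : mpoly K n) g mu mu' :
  conv_max P g mu -> conv_max P g mu' -> mu = mu'.
Proof. by move=> [h1 h2] [h3 h4]; apply: sle_anti; [apply: h4 | apply: h2]. Qed.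

Lemma conv_coefE (P : mpoly K n) g mu : conv_max P g mu -> conv_coef P g = mu.
Proof.
move=> hm; rewrite /conv_coef; case: excluded_middle_informative => h.
  case: constructive_indefinite_description => /= mu' hmu'.
  exact: conv_max_unique hmu' hm.
by case: h; exists mu.
Qed.

Lemma conv_cand_neq0 (P : mpoly K n) g nu : conv_cand P g nu -> nu != 0.
Proof. by case/conv_cand_unit. Qed.

Lemma mem_msupp (Q : mpoly K n) a : mcoef Q a != 0 -> a \in undup (msupp Q).
Proof. by move=> h; rewrite mem_undup; apply: msuppP. Qed.

Lemma monomial_le (Q : mpoly K n) a x : a \in undup (msupp Q) ->
  sle (mcoef Q a * mono a x) (meval Q x).
Proof. exact: (sle_term (fun b => mcoef Q b * mono b x)). Qed.

Lemma meval_le (P Q : mpoly K n) x :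
  (forall a, mcoef P a != 0 -> sle (mcoef P a * mono a x) (meval Q x)) ->
  sle (meval P x) (meval Q x).
Proof.
move=> h; apply: sle_sumP => a _; case: (eqVneq (mcoef P a) 0) => ha.
  by rewrite ha mul0r; exact: sle0.
exact: h.
Qed.

Lemma coef_conv_cand (P : mpoly K n) a : mcoef P a != 0 -> conv_cand P a (mcoef P a).
Proof.
move=> ha; have haE : a \in mexps P by rewrite mem_mexps.
have uE := mexps_uniq P.
exists 1%N, (fun b => nat_of_bool (b == a)); split => //.
- by rewrite (bigD1_seq a) //= eqxx big1 // => b hb; rewrite (negbTE hb).
- move=> k; rewrite (bigD1_seq a) //= eqxx big1 ?addn0 ?mul1n // => b hb.
  by rewrite (negbTE hb).
- rewrite expr1 (bigD1_seq a) //= eqxx expr1 big1 ?mulr1 // => b hb.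
  by rewrite (negbTE hb) expr0.
Qed.

(* Part (a): every monomial of P lies below the corresponding monomial of
   conv(P), and every monomial of conv(P) lies below P. *)
Lemma meval_conv (P : mpoly K n) x : meval P x = meval (conv P) x.
Proof.
apply: sle_anti; apply: meval_le => a ha.
  have [mu hmu] := conv_max_exists (coef_conv_cand ha).
  have hc : mcoef (conv P) a = mu by rewrite /= (conv_coefE hmu).
  have hs : mcoef (conv P) a != 0 by rewrite hc; exact: conv_cand_neq0 hmu.1.
  apply: (sle_trans _ (monomial_le x (mem_msupp hs))).
  by rewrite hc; apply: sle_mulr; apply: hmu.2; exact: coef_conv_cand.
move: ha => /=; case: (conv_coef_cases P a) => [->|hm]; first by rewrite eqxx.
by move=> _; exact: conv_cand_le hm.1 x.
Qed.

Lemma conv_max_le (P Q : mpoly K n) : (forall x, meval P x = meval Q x) ->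
  forall g mu, conv_max P g mu -> exists2 mu', conv_max Q g mu' & sle mu mu'.
Proof.
move=> h g mu hm; apply: conv_max_dominates (conv_cand_neq0 hm.1) _ => x _.
by rewrite -h; exact: conv_cand_le hm.1 x.
Qed.

Lemma conv_coef_eq (P Q : mpoly K n) : (forall x, meval P x = meval Q x) ->
  forall g, conv_coef P g = conv_coef Q g.
Proof.
move=> h g; have h' x : meval Q x = meval P x by rewrite h.
case: (conv_coef_cases P g) => [eP|hP].
  case: (conv_coef_cases Q g) => [eQ|hQ]; first by rewrite eP eQ.
  have [mu h1 _] := conv_max_le h' hQ.
  by move: (conv_cand_neq0 h1.1); rewrite -(conv_coefE h1) eP eqxx.
have [mu' h1 h2] := conv_max_le h hP.
have [mu'' h3 h4] := conv_max_le h' h1.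
rewrite (conv_coefE h1); apply: sle_anti h2 _.
by rewrite (conv_max_unique h3 hP) in h4.
Qed.

(* Part (b), converse: by part (a), the hull determines the function. *)
Lemma meval_eq_of_conv (P Q : mpoly K n) :
  (forall g, mcoef (conv P) g = mcoef (conv Q) g) -> forall x, meval P x = meval Q x.
Proof.
move=> h x; rewrite meval_conv [RHS]meval_conv; apply: sle_anti; apply: meval_le => a ha.
  by rewrite h; apply: monomial_le; apply: mem_msupp; rewrite -h.
by rewrite -h; apply: monomial_le; apply: mem_msupp; rewrite h.
Qed.

End QuasiField.

Theorem lemma3p6 (K : comNzSemiRingType) (n : nat)
  (hchar1 : 1 + 1 = 1 :> K)
  (hinv : forall x : K, x != 0 -> exists y, x * y = 1)
  (htotal : forall u v : K, sle u v \/ sle v u)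
  (hclosed : qf_alg_closed K)
  (hinfinite : forall s : seq K, exists x, x \notin s)
  (P Q : mpoly K n) :
  (forall x : 'I_n -> K, meval P x = meval (conv P) x) /\
  ((forall x : 'I_n -> K, meval P x = meval Q x) <->
   (forall g : expo n, mcoef (conv P) g = mcoef (conv Q) g)).
Proof.
split; first exact: meval_conv.
split; last exact: meval_eq_of_conv.
exact: conv_coef_eq.
Qed.
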